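(* Let $\{X,X_n;\,n\ge1\}$ be i.i.d. random variables with values in a real separable Banach space $\mathbf{B}$ and let $p>0$. Then for any $s>0$, $$\limsup_{n\to\infty}\frac1{\log n}\log\mathbb{P}\Big(\max_{1\le k\le n}\|X_k\|>sn^{1/p}\Big)=\min\Big\{0,\,-\frac{\bar\beta-p}{p}\Big\}$$ and $$\liminf_{n\to\infty}\frac1{\log n}\log\mathbb{P}\Big(\max_{1\le k\le n}\|X_k\|>sn^{1/p}\Big)=\min\Big\{0,\,-\frac{\underline\beta-p}{p}\Big\}.$$
   Context: $\bar\beta=-\limsup_{t\to\infty}\frac1t\log\mathbb{P}(\log\|X\|>t)$, $\underline\beta=-\liminf_{t\to\infty}\frac1t\log\mathbb{P}(\log\|X\|>t)$, both in $[0,\infty]$. Conventions: $\log0=-\infty$; $(\pm\infty+y)/x=\pm\infty$ for $x\in(0,\infty)$, $y\in\mathbb{R}$. *)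

From HB Require Import structures.
From mathcomp Require Import all_boot all_order all_algebra.
From mathcomp Require Import all_classical all_reals all_analysis.
Set Implicit Arguments. Unset Strict Implicit. Unset Printing Implicit Defensive.
Import Order.TTheory GRing.Theory Num.Def Num.Theory.
Import numFieldNormedType.Exports.
Local Open Scope classical_set_scope.
Local Open Scope ring_scope.

Definition borel_set (B : topologicalType) : set (set B) := <<s [set U | open U] >>.

Definition separable (B : topologicalType) : Prop :=
  exists D : set B, countable D /\ dense D.

Definition bRV d (T : measurableType d) (B : topologicalType) (X : T -> B) : Prop :=
  forall A, borel_set A -> measurable (X @^-1` A).

Local Open Scope ereal_scope.

Definition mutually_independent d (T : measurableType d) (R : realType)
  (P : probability T R) (B : topologicalType) (X : nat -> T -> B) : Prop :=
  forall (s : seq nat) (A : nat -> set B), uniq s ->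
    (forall i, i \in s -> borel_set (A i)) ->
    P (\bigcap_(i in [set` s]) (X i @^-1` A i)) = \prod_(i <- s) P (X i @^-1` A i).

Definition ident_distr d (T : measurableType d) (R : realType)
  (P : probability T R) (B : topologicalType) (X : nat -> T -> B) : Prop :=
  forall n A, borel_set A -> P (X n @^-1` A) = P (X 0%N @^-1` A).

Definition iid d (T : measurableType d) (R : realType)
  (P : probability T R) (B : topologicalType) (X : nat -> T -> B) : Prop :=
  (forall n, bRV (X n)) /\ mutually_independent P X /\ ident_distr P X.

Definition elog (R : realType) (x : \bar R) : \bar R :=
  match x with
  | r%:E => if (0 < r)%R then (ln r)%:E else -oo
  | +oo => +oo
  | -oo => -oo
  end.

Definition tailfun d (T : measurableType d) (R : realType) (P : probability T R)
  (B : normedModType R) (Y : T -> B) (t : R) : \bar R :=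
  (t^-1)%:E * elog (P [set w | t%:E < elog (`|Y w|)%:E]).

Definition beta_bar d (T : measurableType d) (R : realType) (P : probability T R)
  (B : normedModType R) (Y : T -> B) : \bar R :=
  - limf_esup (tailfun P Y) (pinfty_nbhs R).

Definition beta_under d (T : measurableType d) (R : realType) (P : probability T R)
  (B : normedModType R) (Y : T -> B) : \bar R :=
  - limf_einf (tailfun P Y) (pinfty_nbhs R).

Definition maxseq d (T : measurableType d) (R : realType) (P : probability T R)
  (B : normedModType R) (X : nat -> T -> B) (p s : R) (n : nat) : \bar R :=
  ((ln n%:R)^-1)%:E *
  elog (P [set w | (s * (n%:R `^ p^-1) < \big[Num.max/0%R]_(1 <= k < n.+1) `|X k w|)%R]).

From HB Require Import structures.
From mathcomp Require Import all_boot all_order all_algebra.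
From mathcomp Require Import all_classical all_reals all_analysis.
From mathcomp Require Import ring lra.
Set Implicit Arguments. Unset Strict Implicit. Unset Printing Implicit Defensive.
Import Order.TTheory GRing.Theory Num.Def Num.Theory.
Import numFieldNormedType.Exports.
Local Open Scope classical_set_scope.
Local Open Scope ring_scope.
Local Open Scope ereal_scope.

(* Put Q(c) = P(||X|| > c).  Independence and equidistribution give
     P(max_{1<=k<=n} ||X_k|| > c) = 1 - (1 - Q(c))^n,
   and the Bernoulli inequalities nQ/(1+nQ) <= 1 - (1-Q)^n <= nQ give
     min(0, log n + log Q) - log 2 <= log(1 - (1-Q)^n) <= log n + log Q.
   For c = s n^{1/p} one has log c = log s + (log n)/p =: t_n, so the normalised
   sequence g(n) = log P(max > s n^{1/p}) / log n lies, up to O(1/log n), between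
   min(0, 1 + h(t_n)/log n) and 1 + h(t_n)/log n, where h(t) = log P(log||X|| > t)
   is nonincreasing.  As t_n -> +oo with gaps t_{n+1} - t_n <= 1/p, the limsup
   (liminf) of h(t_n)/log n is 1/p times the limsup (liminf) of h(t)/t as real
   t -> +oo, i.e. -beta_bar/p (-beta_under/p). *)

Section ExtendedLimits.
Variable R : realType.

Lemma lee_real_upper (x z : \bar R) :
  (forall a : R, z < a%:E -> x <= a%:E) -> x <= z.
Proof.
move=> H; case: z H => [r| |] H.
- apply/lee_addgt0Pr => e e0; apply: H; rewrite lte_fin ltrDl //.
- by rewrite leey.
- case: x H => [r| |] H.
  + by have := H (r - 1)%R (ltNyr _); rewrite lee_fin => h; exfalso; lra.
  + by have := H 0%R (ltNyr _).
  + by [].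
Qed.

Lemma lee_real_lower (x z : \bar R) :
  (forall a : R, a%:E < z -> a%:E <= x) -> z <= x.
Proof.
move=> H; rewrite -leeN2; apply: lee_real_upper => a Ha.
by rewrite leeNl -EFinN; apply: H; rewrite EFinN lteNl.
Qed.

Lemma limn_esup_le_eventually (u : nat -> \bar R) z :
  (forall a : R, z < a%:E -> exists N, forall n, (N <= n)%N -> u n <= a%:E) ->
  limn_esup u <= z.
Proof.
move=> H; apply: lee_real_upper => a /H [N HN].
rewrite /limn_esup limf_esupE; apply: ge_ereal_inf.
exists (ereal_sup (u @` [set n | (N <= n)%N])).
  by exists [set n | (N <= n)%N] => //; exists N.
by apply/ereal_supP => _ [n Hn <-]; apply: HN.
Qed.

Lemma limn_esup_ge_often (u : nat -> \bar R) z :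
  (forall a : R, a%:E < z -> forall N, exists2 n, (N <= n)%N & a%:E <= u n) ->
  z <= limn_esup u.
Proof.
move=> H; apply: lee_real_lower => a /H HN.
rewrite /limn_esup limf_esupE; apply/ereal_infP => _ [V [N _ HV] <-].
have [n Nn an] := HN N.
by apply: le_ereal_sup_tmp; exists (u n) => //; exists n => //; apply: HV.
Qed.

Lemma limn_einf_ge_eventually (u : nat -> \bar R) z :
  (forall a : R, a%:E < z -> exists N, forall n, (N <= n)%N -> a%:E <= u n) ->
  z <= limn_einf u.
Proof.
move=> H; rewrite /limn_einf leeNr; apply: limn_esup_le_eventually => a Ha.
have [N HN] : exists N, forall n, (N <= n)%N -> (- a)%:E <= u n.
  by apply: H; rewrite EFinN lteNl.
by exists N => n /HN; rewrite /= EFinN leeNl.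
Qed.

Lemma limn_einf_le_often (u : nat -> \bar R) z :
  (forall a : R, z < a%:E -> forall N, exists2 n, (N <= n)%N & u n <= a%:E) ->
  limn_einf u <= z.
Proof.
move=> H; rewrite /limn_einf leeNl; apply: limn_esup_ge_often => a Ha N.
have [n Nn Hn] := H (- a)%R ltac:(by rewrite EFinN lteNr) N.
by exists n => //=; rewrite leeNr -EFinN.
Qed.

Lemma limf_esup_lt_eventually (f : R -> \bar R) (a : \bar R) :
  limf_esup f (pinfty_nbhs R) < a -> exists M : R, forall t, (M < t)%R -> f t < a.
Proof.
rewrite limf_esupE => /ereal_inf_ltP [_ [V [M [_ HM]] <-] Ha].
exists M => t /HM Vt; apply: le_lt_trans Ha.
by apply: le_ereal_sup_tmp; exists (f t) => //; exists t.
Qed.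

Lemma limf_esup_gt_often (f : R -> \bar R) (a : \bar R) :
  a < limf_esup f (pinfty_nbhs R) -> forall M : R, exists2 t, (M < t)%R & a < f t.
Proof.
rewrite limf_esupE => Ha M.
have : a < ereal_sup (f @` [set t | (M < t)%R]).
  apply: (lt_le_trans Ha); apply: ereal_inf_lbound.
  exists [set t | (M < t)%R] => //; exists M; split => //; exact: num_real.
by move=> /ereal_sup_gtP [_ [t Mt <-] ft]; exists t.
Qed.

Lemma limf_einf_gt_eventually (f : R -> \bar R) (a : \bar R) :
  a < limf_einf f (pinfty_nbhs R) -> exists M : R, forall t, (M < t)%R -> a < f t.
Proof.
rewrite /limf_einf lteNr => /limf_esup_lt_eventually [M HM].
by exists M => t /HM; rewrite /= lteN2.
Qed.

Lemma limf_einf_lt_often (f : R -> \bar R) (a : \bar R) :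
  limf_einf f (pinfty_nbhs R) < a -> forall M : R, exists2 t, (M < t)%R & f t < a.
Proof.
rewrite /limf_einf lteNl => /limf_esup_gt_often H M; have [t Mt Ht] := H M.
by exists t => //; move: Ht; rewrite lteNl oppeK.
Qed.

End ExtendedLimits.

Section LogGrid.
Variable R : realType.
Local Open Scope ring_scope.

Lemma ln_nat_large (K : R) :
  exists N, forall n, (N <= n)%N -> (2 <= n)%N /\ K < ln n%:R.
Proof.
exists (maxn 2 (truncn (expR K)).+1) => n; rewrite geq_max => /andP[n2 nK].
split => //.
have Kn : expR K < n%:R by apply: (lt_le_trans (truncnS_gt _)); rewrite ler_nat.
by rewrite -ltr_expR lnK // posrE (lt_trans _ Kn) // expR_gt0.
Qed.

Lemma ln_succ_le (m : nat) : (1 <= m)%N -> ln m.+1%:R <= ln m%:R + 1 :> R.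
Proof.
move=> m1; have m0 : 0 < m%:R :> R by rewrite ltr0n.
have -> : m.+1%:R = m%:R * (1 + m%:R^-1) :> R.
  by rewrite mulrDr mulr1 mulfV ?gt_eqF // -natr1.
rewrite lnM ?posrE ?addr_gt0 ?invr_gt0 // lerD2l.
apply: (le_trans (le_ln1Dx _)); last by rewrite invf_le1 // ler1n.
by rewrite (lt_le_trans (_ : -1 < 0)) ?ltrN10 // invr_ge0 ltW.
Qed.

(* The grid a0 + b ln n with mesh parameter b > 0 (b = 1/p in the theorem). *)
Variables (a0 b : R).
Hypothesis b_gt0 : 0 < b.
Let grid (n : nat) := a0 + b * ln n%:R.

Lemma grid_bracket (N : nat) : exists M : R, forall t, M < t ->
  exists m, [/\ (N <= m)%N, (2 <= m)%N, grid m <= t & t < grid m.+1].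
Proof.
exists (a0 + b * ln (maxn N 2)%:R) => t Mt.
set x := expR ((t - a0) / b).
have x0 : 0 < x by rewrite expR_gt0.
have Nx : (maxn N 2)%:R < x.
  rewrite /x -[X in X < _]lnK; last by rewrite posrE ltr0n leq_max orbT.
  rewrite ltr_expR ltr_pdivlMr // mulrC; move: Mt; lra.
have : (maxn N 2 <= truncn x)%N by rewrite truncn_ge_nat ?ltW // ltW.
rewrite geq_max => /andP[hN h2]; exists (truncn x); split => //.
- have : ln (truncn x)%:R <= (t - a0) / b.
    rewrite -ler_expR lnK; last by rewrite posrE ltr0n (leq_trans _ h2).
    by rewrite truncn_le ltW.
  rewrite ler_pdivlMr // /grid => h; nra.
- have : (t - a0) / b < ln (truncn x).+1%:R.
    by rewrite -ltr_expR lnK ?posrE ?ltr0n // truncnS_gt.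
  rewrite ltr_pdivrMr // /grid => h; nra.
Qed.

Lemma grid_step (m : nat) : (1 <= m)%N -> grid m.+1 <= grid m + b.
Proof.
by move=> m1; have := ler_wpM2l (ltW b_gt0) (ln_succ_le m1); rewrite /grid; lra.
Qed.

Lemma grid_large (M l : R) : (Num.max M 0 - a0) / b < l ->
  M < a0 + b * l /\ 0 < a0 + b * l.
Proof.
rewrite ltr_pdivrMr // => H.
have m1 : M <= Num.max M 0 by rewrite le_max lexx.
have m2 : 0 <= Num.max M 0 by rewrite le_max lexx orbT.
split; nra.
Qed.

Lemma ratio_upper (c a : R) : 1 + c * b < a -> exists K : R, forall l C, K < l ->
  C <= c * (a0 + b * l) + `|c| * b -> 1 + C / l <= a.
Proof.
move=> ha; set d := a - 1 - c * b.
have d0 : 0 < d by rewrite /d; lra.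
exists ((`|c * a0| + `|c| * b) / d) => l C Kl HC.
have cb0 : 0 <= `|c| * b by rewrite mulr_ge0 // ltW.
have l0 : 0 < l.
  by apply: le_lt_trans Kl; apply: divr_ge0; [exact: addr_ge0 | exact: ltW].
move: Kl; rewrite ltr_pdivrMr // => Kl.
have ca : c * a0 <= `|c * a0| by apply: ler_norm.
rewrite -(ler_pM2r l0) mulrDl divfK ?gt_eqF // mul1r.
rewrite /d in Kl; nra.
Qed.

(* Symmetric statement for lower bounds, including the log 2 correction and
   the truncation at 0 coming from the lower Bernoulli bound. *)
Lemma ratio_lower (c a : R) : a < 0 -> a - 1 < c * b ->
  exists K : R, forall l C, K < l -> c * (a0 + b * l) - `|c| * b <= C ->
  a <= Num.min 0 (1 + C / l) - ln 2 / l.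
Proof.
move=> a_lt0 ha; set d := Num.min (- a) (1 + c * b - a).
have d0 : 0 < d by rewrite /d lt_min; apply/andP; split; lra.
have l2 : 0 < ln 2 :> R by apply: ln_gt0; rewrite ltr1n.
have dle1 : d <= - a by rewrite /d ge_min lexx.
have dle2 : d <= 1 + c * b - a by rewrite /d ge_min lexx orbT.
exists ((`|c * a0| + `|c| * b + ln 2) / d) => l C Kl HC.
have n1 : 0 <= `|c * a0| by [].
have n2 : 0 <= `|c| * b by rewrite mulr_ge0 // ltW.
have l0 : 0 < l.
  by apply: le_lt_trans Kl; apply: divr_ge0; [rewrite !addr_ge0 // ltW | exact: ltW].
move: Kl; rewrite ltr_pdivrMr // => Kl.
have ca : - `|c * a0| <= c * a0 by rewrite lerNl -normrN ler_norm.
have h1 := ler_wpM2r (ltW l0) dle1.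
have h2 := ler_wpM2r (ltW l0) dle2.
rewrite lerBrDr le_min; apply/andP; split.
- rewrite -(ler_pM2r l0) mulrDl divfK ?gt_eqF // mul0r; nra.
- rewrite -(ler_pM2r l0) !mulrDl !divfK ?gt_eqF // mul1r; nra.
Qed.

End LogGrid.

Section Transfer.
Variable R : realType.
Variables (h : R -> \bar R) (a0 p : R) (g : nat -> \bar R).
Hypothesis p_gt0 : (0 < p)%R.
Hypothesis h_nonincr : forall x y : R, (x <= y)%R -> h y <= h x.
Hypothesis g_le0 : forall n, g n <= 0.
Hypothesis g_upper : forall n c, (2 <= n)%N ->
  h (a0 + p^-1 * ln n%:R)%R <= c%:E -> g n <= (1 + c / ln n%:R)%:E.
Hypothesis g_lower : forall n c, (2 <= n)%N ->
  c%:E <= h (a0 + p^-1 * ln n%:R)%R ->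
  (Num.min 0 (1 + c / ln n%:R) - ln 2 / ln n%:R)%:E <= g n.

Let b := (p^-1)%R.
Let b_gt0 : (0 < b)%R. Proof. by rewrite /b invr_gt0. Qed.
Let ratio := fun t : R => (t^-1)%:E * h t.

Lemma limit_exprE (L : \bar R) : - ((- L - p%:E) * (p^-1)%:E) = L * b%:E + 1.
Proof.
case: L => [r| |] /=.
- by rewrite -EFinM -EFinD; congr EFin; rewrite /b; field; exact: lt0r_neq0.
- by rewrite gt0_mulNye // gt0_mulye.
- by rewrite gt0_mulye // gt0_mulNye.
Qed.

Lemma slope_above (L : \bar R) (x : R) : L * b%:E + 1 < x%:E ->
  exists c : R, L < c%:E /\ (1 + c * b < x)%R.
Proof.
case: L => [r| |] /=.
- rewrite -EFinM -EFinD lte_fin => H.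
  exists ((r + (x - 1) / b) / 2)%R; split.
  + by rewrite lte_fin ltr_pdivlMr // -ltrBlDl ltr_pdivlMr //; lra.
  + have -> : ((r + (x - 1) / b) / 2 * b = (r * b + (x - 1)) / 2)%R.
      by field; exact: lt0r_neq0.
    lra.
- by rewrite gt0_mulye.
- move=> _; exists ((x - 1) / b - 1)%R; split; first exact: ltNyr.
  have -> : (((x - 1) / b - 1) * b = x - 1 - b)%R by field; exact: lt0r_neq0.
  have := b_gt0; lra.
Qed.

Lemma slope_below (L : \bar R) (x : R) : x%:E < L * b%:E + 1 ->
  exists c : R, c%:E < L /\ (x - 1 < c * b)%R.
Proof.
case: L => [r| |] /=.
- rewrite -EFinM -EFinD lte_fin => H.
  exists ((r + (x - 1) / b) / 2)%R; split.
  + by rewrite lte_fin ltr_pdivrMr // -ltrBrDl ltr_pdivrMr //; lra.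
  + have -> : ((r + (x - 1) / b) / 2 * b = (r * b + (x - 1)) / 2)%R.
      by field; exact: lt0r_neq0.
    lra.
- move=> _; exists ((x - 1) / b + 1)%R; split; first exact: ltry.
  have -> : (((x - 1) / b + 1) * b = x - 1 + b)%R by field; exact: lt0r_neq0.
  have := b_gt0; lra.
- by rewrite gt0_mulNye.
Qed.

Lemma ratio_lt (t c : R) : (0 < t)%R -> ratio t < c%:E -> h t <= (c * t)%:E.
Proof.
rewrite /ratio => t0; case: (h t) => [r| |] //=.
- rewrite -EFinM lte_fin lee_fin ltr_pdivrMl // => H; rewrite mulrC; exact: ltW.
- by rewrite gt0_muley ?lte_fin ?invr_gt0.
- by move=> _; exact: leNye.
Qed.

Lemma ratio_gt (t c : R) : (0 < t)%R -> c%:E < ratio t -> (c * t)%:E <= h t.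
Proof.
rewrite /ratio => t0; case: (h t) => [r| |] //=.
- rewrite -EFinM lte_fin lee_fin ltr_pdivlMl // => H; rewrite mulrC; exact: ltW.
- by move=> _; exact: leey.
- by rewrite gt0_muleNy ?lte_fin ?invr_gt0.
Qed.

Lemma slope_shift (c e : R) : (0 <= e <= b)%R ->
  (- (`|c| * b) <= c * e <= `|c| * b)%R.
Proof.
move=> /andP[e0 eb]; rewrite -ler_norml.
by rewrite normrM (ger0_norm e0) ler_wpM2l.
Qed.

Lemma below_min0 (L : \bar R) (a : R) : a%:E < mine 0 (L * b%:E + 1) ->
  (a < 0)%R /\ a%:E < L * b%:E + 1.
Proof. by rewrite lt_min lte_fin => /andP[]. Qed.

Lemma above_min0 (L : \bar R) (a : R) : mine 0 (L * b%:E + 1) < a%:E ->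
  (a <= 0)%R -> L * b%:E + 1 < a%:E.
Proof. by rewrite gt_min lte_fin => /orP[/lt_geF->|]. Qed.

(* Eventually h(t) < c t; along the grid the upper sandwich then bounds g by any
   a > min(0, L b + 1). *)
Lemma limsup_le : limn_esup g <= mine 0 (limf_esup ratio (pinfty_nbhs R) * b%:E + 1).
Proof.
apply: limn_esup_le_eventually => a Ha.
have [a_gt0|a_le0] := ltP 0%R a.
  by exists 0%N => n _; apply: (le_trans (g_le0 n)); rewrite lee_fin ltW.
have [c [Lc hc]] := slope_above (above_min0 Ha a_le0).
have [M HM] := limf_esup_lt_eventually Lc.
have [K HK] := ratio_upper a0 b_gt0 hc.
have [N HN] := ln_nat_large (Num.max K ((Num.max M 0 - a0) / b))%R.
exists N => n /HN [n2]; rewrite gt_max => /andP[Kl Ml].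
have [tM t0] := grid_large b_gt0 Ml.
apply: le_trans (g_upper n2 (ratio_lt t0 (HM _ tM))) _.
rewrite lee_fin; apply: HK Kl _.
have : (0 <= `|c| * b)%R by apply: mulr_ge0 => //; exact: ltW.
lra.
Qed.

(* Arbitrarily large t have h(t) > c t; if t_m <= t < t_{m+1}, monotonicity gives
   h(t_m) >= c t >= c t_m - |c| b, and the lower sandwich makes g(m) large. *)
Lemma limsup_ge : mine 0 (limf_esup ratio (pinfty_nbhs R) * b%:E + 1) <= limn_esup g.
Proof.
apply: limn_esup_ge_often => a /below_min0 [a_lt0 Ha] N.
have [c [cL hc]] := slope_below Ha.
have [K HK] := ratio_lower a0 b_gt0 a_lt0 hc.
have [N1 HN1] := ln_nat_large K.
have [M HM] := grid_bracket a0 b_gt0 (maxn N N1).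
have [t Mt ct] := limf_esup_gt_often cL (Num.max M 0)%R.
move: Mt; rewrite gt_max => /andP[Mt t0].
have [m [Nm_big m2 tm tm1]] := HM t Mt.
move: Nm_big; rewrite geq_max => /andP[Nm N1m]; exists m => //.
have [_ Kl] := HN1 m N1m.
have hm : (c * t)%:E <= h (a0 + p^-1 * ln m%:R).
  exact: le_trans (ratio_gt t0 ct) (h_nonincr tm).
apply: le_trans (g_lower m2 hm); rewrite lee_fin; apply: HK Kl _.
have step := grid_step a0 b_gt0 (ltnW m2).
have /andP[lo hi] := @slope_shift c (t - (a0 + b * ln m%:R))
  ltac:(apply/andP; split; lra).
lra.
Qed.

(* Dually, arbitrarily large t have h(t) < c t, and t < t_{m+1} transports this
   to the grid point t_{m+1}. *)
Lemma liminf_le : limn_einf g <= mine 0 (limf_einf ratio (pinfty_nbhs R) * b%:E + 1).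
Proof.
apply: limn_einf_le_often => a Ha N.
have [a_gt0|a_le0] := ltP 0%R a.
  by exists N => //; apply: (le_trans (g_le0 N)); rewrite lee_fin ltW.
have [c [Lc hc]] := slope_above (above_min0 Ha a_le0).
have [K HK] := ratio_upper a0 b_gt0 hc.
have [N1 HN1] := ln_nat_large K.
have [M HM] := grid_bracket a0 b_gt0 (maxn N N1).
have [t Mt ct] := limf_einf_lt_often Lc (Num.max M 0)%R.
move: Mt; rewrite gt_max => /andP[Mt t0].
have [m [Nm_big m2 tm tm1]] := HM t Mt.
move: Nm_big; rewrite geq_max => /andP[Nm N1m]; exists m.+1; first exact: leqW.
have [m2' Kl] := HN1 m.+1 (leqW N1m).
have hm : h (a0 + p^-1 * ln m.+1%:R) <= (c * t)%:E.
  exact: le_trans (h_nonincr (ltW tm1)) (ratio_lt t0 ct).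
apply: le_trans (g_upper m2' hm) _; rewrite lee_fin; apply: HK Kl _.
have step := grid_step a0 b_gt0 (ltnW m2).
have /andP[lo hi] := @slope_shift c (a0 + b * ln m.+1%:R - t)
  ltac:(apply/andP; split; lra).
lra.
Qed.

(* Eventually h(t) > c t, so the lower sandwich bounds g from below. *)
Lemma liminf_ge : mine 0 (limf_einf ratio (pinfty_nbhs R) * b%:E + 1) <= limn_einf g.
Proof.
apply: limn_einf_ge_eventually => a /below_min0 [a_lt0 Ha].
have [c [cL hc]] := slope_below Ha.
have [M HM] := limf_einf_gt_eventually cL.
have [K HK] := ratio_lower a0 b_gt0 a_lt0 hc.
have [N HN] := ln_nat_large (Num.max K ((Num.max M 0 - a0) / b))%R.
exists N => n /HN [n2]; rewrite gt_max => /andP[Kl Ml].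
have [tM t0] := grid_large b_gt0 Ml.
apply: le_trans (g_lower n2 (ratio_gt t0 (HM _ tM))); rewrite lee_fin.
apply: HK Kl _.
have : (0 <= `|c| * b)%R by apply: mulr_ge0 => //; exact: ltW.
lra.
Qed.

Theorem transfer_limsup :
  limn_esup g = mine 0 (- ((- limf_esup ratio (pinfty_nbhs R) - p%:E) * (p^-1)%:E)).
Proof. by rewrite limit_exprE; apply/le_anti; rewrite limsup_le limsup_ge. Qed.

Theorem transfer_liminf :
  limn_einf g = mine 0 (- ((- limf_einf ratio (pinfty_nbhs R) - p%:E) * (p^-1)%:E)).
Proof. by rewrite limit_exprE; apply/le_anti; rewrite liminf_le liminf_ge. Qed.

End Transfer.

Section Bernoulli.
Variable R : realType.
Local Open Scope ring_scope.

Lemma one_sub_pow_ge (Q : R) (n : nat) : 0 <= Q <= 1 -> 1 - n%:R * Q <= (1 - Q) ^+ n.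
Proof.
move=> /andP[Q0 Q1]; elim: n => [|n IH]; first by rewrite mul0r subr0 expr0.
rewrite exprS -natr1.
have : 0 <= n%:R * Q * Q by rewrite !mulr_ge0.
have Q1' : 0 <= 1 - Q by lra.
have := ler_wpM2l Q1' IH; lra.
Qed.

Lemma one_sub_pow_mul_le (Q : R) (n : nat) : 0 <= Q <= 1 ->
  (1 - Q) ^+ n * (1 + n%:R * Q) <= 1.
Proof.
move=> /andP[Q0 Q1]; elim: n => [|n IH]; first by rewrite mul0r addr0 expr0 mulr1.
rewrite exprS -natr1.
have x0 : 0 <= (1 - Q) ^+ n by apply: exprn_ge0; lra.
have : 0 <= (1 - Q) ^+ n * (n%:R + 1) * (Q * Q).
  by rewrite mulr_ge0 ?mulr_ge0 ?addr_ge0.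
nra.
Qed.

Lemma ln_one_sub_pow_le (Q : R) (n : nat) : (1 <= n)%N -> 0 < Q <= 1 ->
  0 < 1 - (1 - Q) ^+ n -> ln (1 - (1 - Q) ^+ n) <= ln n%:R + ln Q.
Proof.
move=> n1 /andP[Q0 Q1] q0; have n0 : 0 < n%:R :> R by rewrite ltr0n.
have := @one_sub_pow_ge Q n ltac:(by rewrite ltW).
by rewrite -lnM ?posrE // => ?; rewrite ler_ln ?posrE ?mulr_gt0 //; lra.
Qed.

Lemma ln_one_sub_pow_ge (Q : R) (n : nat) : (1 <= n)%N -> 0 < Q <= 1 ->
  0 < 1 - (1 - Q) ^+ n /\
  Num.min 0 (ln n%:R + ln Q) - ln 2 <= ln (1 - (1 - Q) ^+ n).
Proof.
move=> n1 /andP[Q0 Q1]; have n0 : 0 < n%:R :> R by rewrite ltr0n.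
have := @one_sub_pow_mul_le Q n ltac:(by rewrite ltW).
set y := n%:R * Q; set x := (1 - Q) ^+ n => hb.
have y0 : 0 < y by rewrite mulr_gt0.
have hy : y <= (1 - x) * (1 + y) by lra.
have x1 : 0 < 1 - x by have := mulr_gt0 y0 y0; nra.
split => //; rewrite -lnM ?posrE //.
have [y1|y1] := leP y 1.
- have : ln (y / 2) <= ln (1 - x) by rewrite ler_ln ?posrE ?divr_gt0 //; nra.
  rewrite ln_div ?posrE //.
  have : Num.min 0 (ln y) <= ln y by rewrite ge_min lexx orbT.
  lra.
- have : ln (2^-1) <= ln (1 - x) by rewrite ler_ln ?posrE ?invr_gt0 //; nra.
  rewrite lnV ?posrE //.
  have : Num.min 0 (ln y) <= 0 by rewrite ge_min lexx.
  lra.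
Qed.

Lemma elog_EFin (r : R) : elog r%:E = if 0 < r then (ln r)%:E else -oo%E.
Proof. by []. Qed.

Lemma elog_le (r r' : R) : r <= r' -> (elog r%:E <= elog r'%:E)%E.
Proof.
move=> rr; rewrite !elog_EFin; case: ifPn => [r0|_]; last exact: leNye.
by rewrite (lt_le_trans r0 rr) lee_fin ler_ln // posrE (lt_le_trans r0 rr).
Qed.

Lemma normalised_upper (n : nat) (Q C : R) : (2 <= n)%N -> 0 <= Q <= 1 ->
  (elog Q%:E <= C%:E)%E ->
  ((ln n%:R)^-1%:E * elog (1 - (1 - Q) ^+ n)%:E <= (1 + C / ln n%:R)%:E)%E.
Proof.
move=> n2 /andP[Q0 Q1] QC.
have l0 : 0 < ln n%:R :> R by apply: ln_gt0; rewrite ltr1n.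
rewrite elog_EFin; case: ifPn => [q0|_]; last first.
  by rewrite gt0_muleNy ?lte_fin ?invr_gt0 // leNye.
have Qp : 0 < Q.
  rewrite lt_neqAle Q0 andbT; apply: contraTneq q0 => <-.
  by rewrite subr0 expr1n subrr ltxx.
move: QC; rewrite elog_EFin Qp lee_fin => QC.
have := ln_one_sub_pow_le (ltnW n2) (ltac:(by rewrite Qp Q1) : 0 < Q <= 1) q0.
rewrite -EFinM lee_fin mulrC ler_pdivrMr // mulrDl divfK ?gt_eqF // mul1r.
lra.
Qed.

Lemma normalised_lower (n : nat) (Q C : R) : (2 <= n)%N -> 0 <= Q <= 1 ->
  (C%:E <= elog Q%:E)%E ->
  ((Num.min 0 (1 + C / ln n%:R) - ln 2 / ln n%:R)%:E <=
    (ln n%:R)^-1%:E * elog (1 - (1 - Q) ^+ n)%:E)%E.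
Proof.
move=> n2 /andP[Q0 Q1]; rewrite elog_EFin; case: ifPn => [Qp|]; last by rewrite leeNy_eq.
rewrite lee_fin => CQ.
have l0 : 0 < ln n%:R :> R by apply: ln_gt0; rewrite ltr1n.
have [q0 hq] := ln_one_sub_pow_ge (ltnW n2) (ltac:(by rewrite Qp Q1) : 0 < Q <= 1).
rewrite elog_EFin q0 -EFinM lee_fin [X in _ <= X]mulrC ler_pdivlMr //.
rewrite mulrDl mulNr divfK ?lt0r_neq0 //.
set m := Num.min 0 (1 + C / ln n%:R).
have m0 : m * ln n%:R <= 0 by rewrite pmulr_lle0 // ge_min lexx.
have m1 : m * ln n%:R <= ln n%:R + C.
  have := ler_wpM2r (ltW l0) (_ : m <= 1 + C / ln n%:R).
  by rewrite mulrDl mul1r divfK ?lt0r_neq0 //; apply; rewrite ge_min lexx orbT.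
have : m * ln n%:R <= Num.min 0 (ln n%:R + ln Q) by rewrite le_min m0; lra.
lra.
Qed.

End Bernoulli.

Section Probability.
Variables (R : realType) (d : measure_display) (T : measurableType d)
  (P : probability T R) (B : completeNormedModType R) (X : nat -> T -> B).
Hypothesis X_iid : iid P X.

Lemma borel_norm_gt (c : R) : borel_set [set x : B | (c < `|x|)%R].
Proof.
apply: sub_gen_smallest.
apply: (@open_comp _ _ (fun x : B => `|x|%R) [set y : R | (c < y)%R]).
  by move=> x _; exact: norm_continuous.
exact: open_gt.
Qed.

Lemma norm_leE (c : R) :
  [set x : B | (`|x| <= c)%R] = ~` [set x : B | (c < `|x|)%R].
Proof. by apply/seteqP; split => x /=; rewrite leNgt => /negP. Qed.

Lemma borel_norm_le (c : R) : borel_set [set x : B | (`|x| <= c)%R].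
Proof. by rewrite norm_leE; apply: sigma_algebraC; exact: borel_norm_gt. Qed.

Lemma measurable_norm_gt k (c : R) :
  measurable (X k @^-1` [set x : B | (c < `|x|)%R]).
Proof. exact: X_iid.1 k _ (borel_norm_gt c). Qed.

Lemma measurable_norm_le k (c : R) :
  measurable (X k @^-1` [set x : B | (`|x| <= c)%R]).
Proof. exact: X_iid.1 k _ (borel_norm_le c). Qed.

Definition tail (c : R) : R := fine (P (X 0%N @^-1` [set x : B | (c < `|x|)%R])).

Lemma tailE (c : R) : P (X 0%N @^-1` [set x : B | (c < `|x|)%R]) = (tail c)%:E.
Proof. by rewrite /tail fineK // (fin_num_measure P _ (measurable_norm_gt 0 c)). Qed.

Lemma tail_01 (c : R) : (0 <= tail c <= 1)%R.
Proof.
apply/andP; split; rewrite -lee_fin -tailE //.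
exact: probability_le1 (measurable_norm_gt 0 c).
Qed.

Lemma tail_nonincr (c c' : R) : (c <= c')%R -> (tail c' <= tail c)%R.
Proof.
move=> cc; rewrite -lee_fin -!tailE; apply: le_measure; rewrite ?inE;
  try exact: measurable_norm_gt.
by move=> w /=; apply: le_lt_trans.
Qed.

(* The maximum exceeds c >= 0 iff some X_k does: by independence and
   equidistribution its probability is 1 - (1 - Q(c))^n. *)
Lemma prob_max_gt (n : nat) (c : R) : (0 <= c)%R ->
  P [set w | (c < \big[Num.max/0%R]_(1 <= k < n.+1) `|X k w|)%R] =
  (1 - (1 - tail c) ^+ n)%:E.
Proof.
move=> c0; set A := [set x : B | (`|x| <= c)%R].
have -> : [set w | (c < \big[Num.max/0%R]_(1 <= k < n.+1) `|X k w|)%R] =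
    ~` \bigcap_(i in [set` index_iota 1 n.+1]) (X i @^-1` A).
  apply/seteqP; split => w /=.
  - move=> Hw Hall; move: Hw; rewrite ltNge => /negP; apply.
    by rewrite big_seq; apply: bigmax_le => // k /Hall.
  - move=> Hnot; rewrite ltNge; apply/negP => Hle; apply: Hnot => k /= hk.
    apply: le_trans Hle.
    exact: (@le_bigmax_seq _ _ _ _ _ k xpredT (fun i => `|X i w|%R)).
rewrite probability_setC; last first.
  by apply: bigcap_measurableType => k _; exact: measurable_norm_le.
rewrite X_iid.2.1 ?iota_uniq //; last by move=> i _; exact: borel_norm_le.
have PA i : P (X i @^-1` A) = (1 - tail c)%:E.
  rewrite X_iid.2.2; last exact: borel_norm_le.
  rewrite /A norm_leE preimage_setC probability_setC ?tailE //.
  exact: measurable_norm_gt.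
under eq_bigr => i _ do rewrite PA.
by rewrite prodEFin prodr_const_nat subn1 -EFinB.
Qed.

(* The log-tail h(t) = log P(log ||X|| > t), so that tailfun t = h(t) / t. *)
Definition log_tail (t : R) : \bar R :=
  elog (P [set w | t%:E < elog (`|X 0%N w|)%:E]).

Lemma log_tailE (t : R) : log_tail t = elog (tail (expR t))%:E.
Proof.
rewrite /log_tail -tailE; congr (elog (P _)).
apply/seteqP; split => w /=; case: ifPn => [w0|w0].
- by rewrite lte_fin -{2}(lnK (w0 : _ \in Num.pos)) ltr_expR.
- by rewrite ltNge leNye.
- by rewrite lte_fin -{1}(lnK (w0 : _ \in Num.pos)) ltr_expR.
- by move=> /(lt_trans (expR_gt0 t)); rewrite (negbTE w0).
Qed.

Lemma log_tail_nonincr (x y : R) : (x <= y)%R -> log_tail y <= log_tail x.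
Proof.
by move=> xy; rewrite !log_tailE; apply/elog_le/tail_nonincr; rewrite ler_expR.
Qed.

Variables (p s : R).
Hypothesis s_gt0 : (0 < s)%R.

Lemma threshold_ge0 (n : nat) : (0 <= s * n%:R `^ p^-1)%R.
Proof. by rewrite mulr_ge0 ?powR_ge0 // ltW. Qed.

Lemma log_thresholdE (n : nat) : (1 <= n)%N ->
  expR (ln s + p^-1 * ln n%:R) = (s * n%:R `^ p^-1)%R.
Proof. by move=> n1; rewrite expRD lnK ?posrE // /powR gt_eqF ?ltr0n. Qed.

Lemma maxseqE (n : nat) : maxseq P X p s n =
  ((ln n%:R)^-1)%:E * elog (1 - (1 - tail (s * n%:R `^ p^-1)) ^+ n)%:E.
Proof. by rewrite /maxseq prob_max_gt ?threshold_ge0. Qed.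

Lemma maxseq_le0 (n : nat) : maxseq P X p s n <= 0.
Proof.
rewrite maxseqE; apply: mule_ge0_le0.
  rewrite lee_fin invr_ge0; case: n => [|n]; first by rewrite ln0.
  by rewrite ln_ge0 // ler1n.
rewrite elog_EFin; case: ifPn => _; last exact: leNye.
rewrite lee_fin ln_le0 // lerBlDr lerDl exprn_ge0 // subr_ge0.
by have /andP[] := tail_01 (s * n%:R `^ p^-1).
Qed.

Lemma maxseq_upper (n : nat) (c : R) : (2 <= n)%N ->
  log_tail (ln s + p^-1 * ln n%:R) <= c%:E ->
  maxseq P X p s n <= (1 + c / ln n%:R)%:E.
Proof.
move=> n2; rewrite log_tailE log_thresholdE ?(ltnW n2) // maxseqE.
exact: normalised_upper n2 (tail_01 _).
Qed.

Lemma maxseq_lower (n : nat) (c : R) : (2 <= n)%N ->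
  c%:E <= log_tail (ln s + p^-1 * ln n%:R) ->
  (Num.min 0 (1 + c / ln n%:R) - ln 2 / ln n%:R)%:E <= maxseq P X p s n.
Proof.
move=> n2; rewrite log_tailE log_thresholdE ?(ltnW n2) // maxseqE.
exact: normalised_lower n2 (tail_01 _).
Qed.

End Probability.

Unset Implicit Arguments.

Theorem lemma3p4 (R : realType) (d : measure_display) (T : measurableType d)
  (P : probability T R) (B : completeNormedModType R) (X : nat -> T -> B)
  (p : R) :
  separable B -> iid P X -> (0 < p)%R ->
  forall s : R, (0 < s)%R ->
    limn_esup (maxseq P X p s)
      = mine 0 (- ((beta_bar P (X 0%N) - p%:E) * (p^-1)%:E))
    /\ limn_einf (maxseq P X p s)
      = mine 0 (- ((beta_under P (X 0%N) - p%:E) * (p^-1)%:E)).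
Proof.
move=> _ X_iid p_gt0 s s_gt0.
have h_nonincr := log_tail_nonincr X_iid.
have g_le0 := maxseq_le0 X_iid p s_gt0.
have g_upper := maxseq_upper X_iid (p := p) s_gt0.
have g_lower := maxseq_lower X_iid (p := p) s_gt0.
split.
- exact: (transfer_limsup p_gt0 h_nonincr g_le0 g_upper g_lower).
- exact: (transfer_liminf p_gt0 h_nonincr g_le0 g_upper g_lower).
Qed.
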